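(* Let $U=[a_1,b_1]\cup\dots\cup[a_k,b_k]\subseteq\mathbb{R}$ with $a_1\le b_1<a_2\le b_2<\dots<a_k\le b_k$, and let $S=\{x-a_1,\ (x-a_2)(x-b_1),\ \dots,\ (x-a_k)(x-b_{k-1}),\ b_k-x\}\subseteq\mathbb{R}[x]$. Then in $\mathbb{R}[x]$ the preordering generated by $S$ equals the quadratic module generated by $S$, i.e. $T_S=M_S$. Consequently the same equality $T_S=M_S$ holds for the preordering and quadratic module generated by $S$ in $\mathbb{R}[x,y]$.
   Context: For a finite set $S=\{s_1,\dots,s_m\}$ in a polynomial ring $A$ (here $A=\mathbb{R}[x]$ or $\mathbb{R}[x,y]$), the quadratic module $M_S$ generated by $S$ is the set of all $\sigma_0+\sigma_1s_1+\dots+\sigma_ms_m$ with each $\sigma_i$ a sum of squares of elements of $A$; the preordering $T_S$ generated by $S$ is the set of all $\sum_{e\in\{0,1\}^m}\sigma_e s_1^{e_1}\cdots s_m^{e_m}$ with each $\sigma_e$ a sum of squares in $A$. The set $S$ above is called the natural choice of generators for $U$. *)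

From HB Require Import structures.
From mathcomp Require Import all_boot all_order all_algebra.
From mathcomp Require Import reals.
Set Implicit Arguments. Unset Strict Implicit. Unset Printing Implicit Defensive.
Import Order.TTheory GRing.Theory Num.Theory.
Local Open Scope ring_scope.

Definition sos (A : comRingType) (p : A) : Prop :=
  exists l : seq A, p = \sum_(q <- l) q ^+ 2.

Definition qmodule (A : comRingType) (S : seq A) (p : A) : Prop :=
  exists (s0 : A) (sig : 'I_(size S) -> A),
    sos s0 /\ (forall i, sos (sig i)) /\
    p = s0 + \sum_(i < size S) sig i * S`_i.

(* preordering T_S generated by S: sum over e in {0,1}^m of sigma_e * prod s_i^{e_i} *)
Definition preordering (A : comRingType) (S : seq A) (p : A) : Prop :=
  exists sig : {set 'I_(size S)} -> A,
    (forall e, sos (sig e)) /\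
    p = \sum_(e : {set 'I_(size S)}) sig e * \prod_(i in e) S`_i.

(* natural generators for U = [a 0, b 0] ∪ ... ∪ [a k, b k] (k+1 intervals):
   x - a_0, (x - a_{i+1})(x - b_i) for i < k, b_k - x *)
Definition natgens (R : realType) (k : nat) (a b : nat -> R) : seq {poly R} :=
  ('X - (a 0%N)%:P) ::
    rcons [seq ('X - (a i.+1)%:P) * ('X - (b i)%:P) | i <- iota 0 k]
          ((b k)%:P - 'X).

(* T_S = M_S holds as soon as every product s_i s_j of two distinct generators lies in
   M_S: inside a product of generators, s_i s_j = σ_0 + Σ_l σ_l s_l replaces two factors
   by at most one, or by a square.  This criterion survives the ring embedding
   R[x] -> R[x, y].  For the natural generators, with l = x - a_1, r = b_k - x and the gap
   quadratics q_i = (x - a_(i+1))(x - b_i), the products l r, l q_i, r q_i and q_i q_j are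
   written in M_S through Bezout identities u E + q (k (c - u)^(2n+1)) = 1 whose cofactors
   are either nonnegative on R, hence sums of squares, or nonnegative on [a_1, b_k], hence
   in the preordering of {l, r}; l r q_i then reduces to r q_i and l q_i since l + r is a
   positive constant. *)

From HB Require Import structures.
From mathcomp Require Import all_boot all_order all_algebra.
From mathcomp Require Import reals.
From mathcomp Require Import zify ring lra.
From mathcomp Require Import polyrcf boolp.
From mathcomp Require classical_sets topology normedtype derive.
Import Order.TTheory GRing.Theory Num.Theory.
Local Open Scope ring_scope.
Set Implicit Arguments. Unset Strict Implicit. Unset Printing Implicit Defensive.

Section QuadraticModule.
Variable A : comRingType.
Implicit Types (p q s : A) (S : seq A).

Lemma sos0 : sos (0 : A). Proof. by exists [::]; rewrite big_nil. Qed.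

Lemma sos_sqr p : sos (p ^+ 2). Proof. by exists [:: p]; rewrite big_seq1. Qed.

Lemma sos1 : sos (1 : A). Proof. by rewrite -(expr1n _ 2); apply: sos_sqr. Qed.

Lemma sosD p q : sos p -> sos q -> sos (p + q).
Proof. by move=> [l1 ->] [l2 ->]; exists (l1 ++ l2); rewrite big_cat. Qed.

Lemma sosM p q : sos p -> sos q -> sos (p * q).
Proof.
move=> [l1 ->] [l2 ->]; exists [seq x * y | x <- l1, y <- l2].
rewrite big_allpairs_dep /= mulr_suml; apply: eq_bigr => x _.
by rewrite mulr_sumr; apply: eq_bigr => y _; rewrite exprMn.
Qed.

Lemma sos_sqrM p q : sos p -> sos (q ^+ 2 * p).
Proof. exact/sosM/sos_sqr. Qed.

Lemma qmoduleD S p q : qmodule S p -> qmodule S q -> qmodule S (p + q).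
Proof.
move=> [s0 [sg [h0 [hs ->]]]] [t0 [tg [k0 [kt ->]]]].
exists (s0 + t0), (fun i => sg i + tg i); split; first exact: sosD.
split; first by move=> i; apply: sosD.
rewrite -!addrA; congr (_ + _); rewrite addrCA; congr (_ + _).
by rewrite -big_split /=; apply: eq_bigr => i _; rewrite mulrDl.
Qed.

Lemma qmodule_sosM S s p : sos s -> qmodule S p -> qmodule S (s * p).
Proof.
move=> hs [s0 [sg [h0 [hg ->]]]].
exists (s * s0), (fun i => s * sg i); split; first exact: sosM.
split; first by move=> i; apply: sosM.
by rewrite mulrDr mulr_sumr; congr (_ + _); apply: eq_bigr => i _; rewrite mulrA.
Qed.

Lemma qmodule_sos S p : sos p -> qmodule S p.
Proof.
move=> h; exists p, (fun _ => 0); split => //; split; first by move=> _; apply: sos0.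
by rewrite big1 ?addr0 // => i _; rewrite mul0r.
Qed.

Lemma qmodule_gen S (i : 'I_(size S)) s : sos s -> qmodule S (s * S`_i).
Proof.
move=> hs; exists 0, (fun j => if j == i then s else 0).
split; first exact: sos0.
split; first by move=> j; case: ifP => _ //; apply: sos0.
rewrite add0r (bigD1 i) //= eqxx big1 ?addr0 // => j /negbTE ->.
by rewrite mul0r.
Qed.

Lemma preorderingD S p q :
  preordering S p -> preordering S q -> preordering S (p + q).
Proof.
move=> [sg [hs ->]] [tg [ht ->]]; exists (fun e => sg e + tg e); split.
  by move=> e; apply: sosD.
by rewrite -big_split /=; apply: eq_bigr => e _; rewrite mulrDl.
Qed.

Lemma preordering_gen S (e0 : {set 'I_(size S)}) s :
  sos s -> preordering S (s * \prod_(i in e0) S`_i).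
Proof.
move=> hs; exists (fun e => if e == e0 then s else 0); split.
  by move=> e; case: ifP => _ //; apply: sos0.
rewrite (bigD1 e0) //= eqxx [X in _ = _ + X]big1 ?addr0 // => e /negbTE ->.
by rewrite mul0r.
Qed.

Lemma qmodule_preordering S p : qmodule S p -> preordering S p.
Proof.
move=> [s0 [sg [h0 [hg ->]]]]; apply: preorderingD.
  by have := @preordering_gen S set0 _ h0; rewrite big_set0 mulr1.
elim/big_ind: _ => [|x y|i _]; last by have := preordering_gen [set i] (hg i); rewrite big_set1.
  by have := @preordering_gen S set0 _ sos0; rewrite mul0r.
exact: preorderingD.
Qed.

Lemma mulr_prod_set (I : finType) (F : I -> A) (e : {set I}) l :
  F l * \prod_(i in e) F i =
  if l \in e then F l ^+ 2 * \prod_(i in e :\ l) F i else \prod_(i in l |: e) F i.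
Proof.
case: ifP => le; first by rewrite (big_setD1 l le) mulrA -expr2.
by rewrite (big_setD1 l (setU11 l e)) /= setU1K ?le.
Qed.

Definition pairwise_qmodule S :=
  forall i j : 'I_(size S), i != j -> qmodule S (S`_i * S`_j).

Section PairwiseProducts.
Variable S : seq A.
Hypothesis pairS : pairwise_qmodule S.

(* Induction on #|e|: a product S_i S_j inside a monomial is rewritten as
   s_0 + \sum_l s_l S_l, and each S_l either joins the monomial or squares. *)
Lemma qmodule_sos_prod (e : {set 'I_(size S)}) s :
  sos s -> qmodule S (s * \prod_(i in e) S`_i).
Proof.
have [n] := ubnP #|e|; elim: n e s => // n IH e s /ltnSE he hs.
have [->|[i ie]] := set_0Vmem e; first by rewrite big_set0 mulr1; apply: qmodule_sos.
have [e1|[j je]] := set_0Vmem (e :\ i).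
  have -> : e = [set i] by apply/setP => x; rewrite -(setD1K ie) e1 setU0.
  by rewrite big_set1; apply: qmodule_gen.
have ij : i != j by move: je; rewrite in_setD1 eq_sym => /andP[].
set e' := e :\ i :\ j.
have he' : (#|e'|.+2 <= n)%N.
  by rewrite (leq_trans _ he) // [#|e|](cardsD1 i) ie (cardsD1 j (e :\ i)) je.
have -> : \prod_(k in e) S`_k = S`_i * S`_j * \prod_(k in e') S`_k.
  by rewrite (big_setD1 i ie) (big_setD1 j je) /= mulrA.
clearbody e'.
have [s0 [sg [h0 [hg ->]]]] := pairS ij.
rewrite mulrDl mulrDr mulrA; apply: qmoduleD.
  by apply: IH; [exact: leq_trans (leqnSn _) he' | exact: sosM].
rewrite mulr_suml mulr_sumr.
apply: (big_ind (qmodule S)) => [||l _]; [exact/qmodule_sos/sos0 | exact: qmoduleD |].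
rewrite -mulrA (mulr_prod_set (fun k : 'I_(size S) => S`_k)).
have hsg : sos (s * sg l) by apply: sosM.
case: ifP => le; rewrite mulrA.
- rewrite mulrA; apply: IH; last exact: sosM hsg (sos_sqr _).
  exact: leq_ltn_trans (subset_leq_card (subD1set e' l)) (leq_trans (leqnSn _) he').
- by apply: IH => //; rewrite cardsU1 le.
Qed.

Lemma preordering_qmodule p : preordering S p -> qmodule S p.
Proof.
move=> [sg [hs ->]]; elim/big_ind: _ => [|x y|e _]; last exact: qmodule_sos_prod.
  exact: qmodule_sos sos0.
exact: qmoduleD.
Qed.

Lemma preordering_eq_qmodule p : preordering S p <-> qmodule S p.
Proof. by split; [apply: preordering_qmodule | apply: qmodule_preordering]. Qed.

End PairwiseProducts.
End QuadraticModule.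

Section RMorphism.
Variables (A B : comRingType) (f : {rmorphism A -> B}).

Lemma sos_rmorph (p : A) : sos p -> sos (f p).
Proof.
move=> [l ->]; exists (map f l); rewrite rmorph_sum big_map.
by apply: eq_bigr => x _; rewrite rmorphXn.
Qed.

Lemma qmodule_rmorph (S : seq A) p : qmodule S p -> qmodule (map f S) (f p).
Proof.
move=> [s0 [sg [h0 [hg ->]]]]; rewrite rmorphD rmorph_sum; apply: qmoduleD.
  exact/qmodule_sos/sos_rmorph.
elim/big_ind: _ => [|x y|i _]; first exact: qmodule_sos (sos0 _).
  exact: qmoduleD.
have i' : (i < size (map f S))%N by rewrite size_map ltn_ord.
rewrite rmorphM -(nth_map 0 0) ?ltn_ord //.
exact: (qmodule_gen (Ordinal i') (sos_rmorph (hg i))).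
Qed.

Lemma pairwise_qmodule_map (S : seq A) :
  pairwise_qmodule S -> pairwise_qmodule (map f S).
Proof.
move=> pairS i j ij; have hi : (i < size S)%N by rewrite -(size_map f) ltn_ord.
have hj : (j < size S)%N by rewrite -(size_map f) ltn_ord.
rewrite !(nth_map 0) // -rmorphM.
exact: (qmodule_rmorph (pairS (Ordinal hi) (Ordinal hj) ij)).
Qed.

End RMorphism.

Lemma factor_two_roots (F : idomainType) (f : {poly F}) x y : x != y ->
  root f x -> root f y -> exists g, f = ('X - x%:P) * ('X - y%:P) * g.
Proof.
move=> xy /factor_theorem[g1 ->].
rewrite rootE hornerM hornerXsubC mulf_eq0 subr_eq0 (eq_sym y) (negbTE xy) orbF.
move=> /factor_theorem[g ->].
by exists g; ring.
Qed.

Section NonnegativePolynomials.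
Variable R : realType.
Implicit Types (f g : {poly R}) (c u v x y : R).

Lemma sosC c : 0 <= c -> sos c%:P.
Proof.
by move=> c0; exists [:: (Num.sqrt c)%:P]; rewrite big_seq1 -rmorphXn /= sqr_sqrtr.
Qed.

Lemma poly_lt0_near f x : f.[x] < 0 ->
  exists2 d, 0 < d & forall y, `|y - x| < d -> f.[y] < 0.
Proof.
move=> fx; have /(poly_cont x f)[d d0 hd] : 0 < - f.[x] by rewrite oppr_gt0.
by exists d => // y /hd; rewrite ltr_norml => /andP[_]; rewrite ltrBlDr addNr.
Qed.

Lemma poly_ge0_oo_left f u v : u < v ->
  (forall y, u < y < v -> 0 <= f.[y]) -> 0 <= f.[u].
Proof.
move=> uv hf; rewrite leNgt; apply/negP => /poly_lt0_near[d d0 hd].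
pose m := Num.min d (v - u).
have m0 : 0 < m by rewrite lt_min d0 subr_gt0.
have [md mvu] : m <= d /\ m <= v - u by rewrite !ge_min !lexx orbT.
have := hf (u + m / 2); rewrite leNgt => /(_ _)/negP; apply; first lra.
by apply: hd; rewrite addrAC subrr add0r ger0_norm; lra.
Qed.

Lemma poly_ge0_oo_right f u v : u < v ->
  (forall y, u < y < v -> 0 <= f.[y]) -> 0 <= f.[v].
Proof.
move=> uv hf; have := @poly_ge0_oo_left (f \Po - 'X) (- v) (- u).
rewrite horner_comp !hornerE opprK; apply; first lra.
by move=> y yuv; rewrite horner_comp !hornerE; apply: hf; lra.
Qed.

Lemma poly_ge0_cc f u v : u < v ->
  (forall y, u < y < v -> 0 <= f.[y]) -> forall x, u <= x <= v -> 0 <= f.[x].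
Proof.
move=> uv hf x /andP[ux xv].
have [<-|xu] := eqVneq u x; first exact: poly_ge0_oo_left hf.
have [->|xv'] := eqVneq x v; first exact: poly_ge0_oo_right hf.
by apply: hf; rewrite !lt_neqAle xu xv' ux xv.
Qed.

Lemma poly_ge0_punctured f x :
  (forall y, y != x -> 0 <= f.[y]) -> forall y, 0 <= f.[y].
Proof.
move=> hf y; have [->|] := eqVneq y x; last exact: hf.
apply: (@poly_ge0_oo_left _ x (x + 1)); first lra.
by move=> z /andP[xz _]; apply: hf; rewrite gt_eqF.
Qed.

Lemma poly_ge0_coercive f m : (forall x, 0 <= f.[x]) -> (1 < size f)%N ->
  exists M, forall x, M <= `|x| -> m <= f.[x].
Proof.
have lim g : (forall x, 0 <= g.[x]) -> (1 < size g)%N ->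
    exists M, forall x, M <= x -> m <= g.[x].
  move=> g0 sg; have gn0 : g != 0 by rewrite -size_poly_gt0 (ltn_trans _ sg).
  apply: poly_lim_infty (sg); rewrite lt_def lead_coef_eq0 gn0 /= leNgt.
  apply/negP => lg.
  have lgN : 0 < lead_coef (- g) by rewrite lead_coefN oppr_gt0.
  have sgN : (1 < size (- g))%N by rewrite size_polyN.
  have [M hM] := poly_lim_infty 1 lgN sgN.
  by have := hM M (lexx _); rewrite hornerN lerNr; have := g0 M; lra.
move=> f0 sf; have [M1 h1] := lim f f0 sf.
have fN0 x : 0 <= (f \Po - 'X).[x] by rewrite horner_comp.
have sfN : (1 < size (f \Po - 'X))%N.
  by rewrite size_comp_poly2 // size_polyN size_polyX.
have [M2 h2] := lim _ fN0 sfN.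
exists (Num.max M1 M2) => x; rewrite ge_max => /andP[xM1 xM2].
have [x0|x0] := lerP 0 x; first by apply: h1; rewrite -(ger0_norm x0).
by have := h2 (- x); rewrite horner_comp !hornerE opprK; apply; rewrite -(ltr0_norm x0).
Qed.

Section ExtremeValue.
Import classical_sets topology normedtype derive numFieldNormedType.Exports.

Lemma poly_ge0_has_min f : (forall x, 0 <= f.[x]) ->
  exists x0, forall x, f.[x0] <= f.[x].
Proof.
move=> f0; have [sf|sf] := leqP (size f) 1.
  by exists 0 => x; rewrite [f]size1_polyC // !hornerC.
have [M hM] := poly_ge0_coercive f.[0] f0 sf.
pose N := Num.max M 0.
have [MN N0] : M <= N /\ 0 <= N by rewrite !le_max !lexx orbT.
have [c _ hc] : exists2 c, c \in `[- N, N] &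
    forall t, t \in `[- N, N] -> f.[c] <= f.[t].
  apply: (EVT_min (f := horner f)); first by rewrite (le_trans _ N0) // oppr_le0.
  by apply/continuous_subspaceT => x; apply: continuous_horner.
exists c => x; have [xN|xN] := lerP `|x| N.
  by apply: hc; rewrite in_itv /= -ler_norml.
apply: le_trans (hc 0 _) (hM x _); first by rewrite in_itv /= oppr_le0 N0.
exact/ltW/(le_lt_trans MN).
Qed.

End ExtremeValue.

(* (X - x0) h1 >= 0 forces h1 >= 0 right of x0 and h1 <= 0 left of it, so h1 also
   vanishes at x0. *)
Lemma poly_ge0_root_sqr f x0 : (forall x, 0 <= f.[x]) -> root f x0 ->
  exists2 g, (forall x, 0 <= g.[x]) & f = g * ('X - x0%:P) ^+ 2.
Proof.
move=> f0 /factor_theorem[h1 eh1].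
have h1y y : 0 <= (y - x0) * h1.[y] by have := f0 y; rewrite eh1 !hornerE mulrC.
have h1x0 : root h1 x0.
  rewrite rootE eq_le; apply/andP; split.
    rewrite -oppr_ge0 -hornerN; apply: (@poly_ge0_oo_right _ (x0 - 1)); first lra.
    move=> y /andP[_ yx0]; have := h1y y; rewrite hornerN; nra.
  apply: (@poly_ge0_oo_left _ _ (x0 + 1)); first lra.
  by move=> y /andP[x0y _]; have := h1y y; nra.
have [g eg] := factor_theorem _ _ h1x0.
have ef : f = g * ('X - x0%:P) ^+ 2 by rewrite eh1 eg -mulrA -expr2.
exists g => //; apply: (poly_ge0_punctured (x := x0)) => y yx0.
have := f0 y; rewrite ef hornerM horner_exp hornerXsubC.
by rewrite pmulr_lge0 // exprn_even_gt0 //= subr_eq0.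
Qed.

Lemma poly_ge0_sos f : (forall x, 0 <= f.[x]) -> sos f.
Proof.
have [n] := ubnP (size f); elim: n f => // n IH f /ltnSE sf f0.
have [s1|s1] := leqP (size f) 1.
  by rewrite [f]size1_polyC //; apply: sosC; rewrite -horner_coef0.
have [x0 hx0] := poly_ge0_has_min f0.
have fx0 x : 0 <= (f - f.[x0]%:P).[x] by rewrite !hornerE subr_ge0.
have rx0 : root (f - f.[x0]%:P) x0 by rewrite rootE !hornerE subrr.
have [g g0 eg] := poly_ge0_root_sqr fx0 rx0.
have sg : (size g < size f)%N.
  have [->|gn0] := eqVneq g 0; first by rewrite size_poly0 (ltn_trans _ s1).
  have : size (f - f.[x0]%:P) = size f.
    by rewrite size_polyDl // size_polyN (leq_ltn_trans (size_polyC_leq1 _)).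
  rewrite eg size_mul ?expf_neq0 ?polyXsubC_eq0 // size_exp_XsubC addnS => <-.
  by rewrite -{1}[size g]addn0 ltn_add2l.
have -> : f = f.[x0]%:P + g * ('X - x0%:P) ^+ 2 by rewrite -eg addrC subrK.
apply: sosD; first exact/sosC/f0.
by rewrite mulrC; apply/sos_sqrM/IH; rewrite // (leq_trans sg).
Qed.

End NonnegativePolynomials.

Section IntervalPreordering.
Variables (R : realType) (A B : R).
Implicit Types (f g : {poly R}) (r x y : R).

Definition itv_preordering f := exists s0 s1 s2 s3,
  [/\ sos s0, sos s1, sos s2, sos s3 &
   f = s0 + ('X - A%:P) * s1 + (B%:P - 'X) * s2 + ('X - A%:P) * (B%:P - 'X) * s3].

Lemma itv_preorderingD f g :
  itv_preordering f -> itv_preordering g -> itv_preordering (f + g).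
Proof.
move=> [s0 [s1 [s2 [s3 [h0 h1 h2 h3 ->]]]]] [t0 [t1 [t2 [t3 [k0 k1 k2 k3 ->]]]]].
by exists (s0 + t0), (s1 + t1), (s2 + t2), (s3 + t3); split; try exact: sosD; ring.
Qed.

Lemma itv_preordering_sos f : sos f -> itv_preordering f.
Proof.
by move=> h; exists f, 0, 0, 0; split; rewrite ?mulr0 ?addr0 //; apply: sos0.
Qed.

Lemma itv_preorderingZ (c : R) f :
  0 <= c -> itv_preordering f -> itv_preordering (c%:P * f).
Proof.
move=> /sosC c0 [s0 [s1 [s2 [s3 [h0 h1 h2 h3 ->]]]]].
by exists (c%:P * s0), (c%:P * s1), (c%:P * s2), (c%:P * s3); split;
  try exact: sosM; ring.
Qed.

Lemma itv_preorderingMl f : itv_preordering f -> itv_preordering (('X - A%:P) * f).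
Proof.
move=> [s0 [s1 [s2 [s3 [h0 h1 h2 h3 ->]]]]].
by exists (('X - A%:P) ^+ 2 * s1), s0, (('X - A%:P) ^+ 2 * s3), s2; split;
  try exact: sos_sqrM; try done; ring.
Qed.

Lemma itv_preorderingMr f : itv_preordering f -> itv_preordering ((B%:P - 'X) * f).
Proof.
move=> [s0 [s1 [s2 [s3 [h0 h1 h2 h3 ->]]]]].
by exists ((B%:P - 'X) ^+ 2 * s2), ((B%:P - 'X) ^+ 2 * s3), s0, s1; split;
  try exact: sos_sqrM; try done; ring.
Qed.

Lemma itv_preordering_XsubCM r f :
  r <= A -> itv_preordering f -> itv_preordering (('X - r%:P) * f).
Proof.
move=> rA hf; have -> : ('X - r%:P) * f = ('X - A%:P) * f + (A - r)%:P * f.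
  by rewrite polyCB; ring.
by apply: itv_preorderingD; [apply: itv_preorderingMl | apply: itv_preorderingZ; rewrite ?subr_ge0].
Qed.

Lemma itv_preordering_CsubXM r f :
  B <= r -> itv_preordering f -> itv_preordering ((r%:P - 'X) * f).
Proof.
move=> Br hf; have -> : (r%:P - 'X) * f = (B%:P - 'X) * f + (r - B)%:P * f.
  by rewrite polyCB; ring.
by apply: itv_preorderingD; [apply: itv_preorderingMr | apply: itv_preorderingZ; rewrite ?subr_ge0].
Qed.

Hypothesis AB : A < B.

(* Induction on the degree: if f < 0 somewhere, then at a point outside [A, B], so f has a
   root r outside ]A, B[ and f = (X - r) g with g of constant sign on [A, B]. *)
Lemma poly_ge0_itv_preordering f :
  (forall x, A <= x <= B -> 0 <= f.[x]) -> itv_preordering f.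
Proof.
have [n] := ubnP (size f); elim: n f => // n IH f /ltnSE sf f0.
have [fge0|] := pselect (forall x, 0 <= f.[x]).
  exact/itv_preordering_sos/poly_ge0_sos.
move=> /existsNP[x1 /negP]; rewrite -ltNge => fx1.
have fn0 : f != 0 by apply: contraTneq fx1 => ->; rewrite horner0 ltxx.
have factor r : root f r -> exists2 g, f = ('X - r%:P) * g & (size g < size f)%N.
  move=> /factor_theorem[g eg]; exists g; first by rewrite mulrC.
  have gn0 : g != 0 by apply: contraNneq fn0; rewrite eg => ->; rewrite mul0r.
  by rewrite eg size_mul ?polyXsubC_eq0 // size_XsubC addn2.
have IHg g : (size g < size f)%N -> (forall y, A < y < B -> 0 <= g.[y]) ->
    itv_preordering g.
  by move=> sg g0; apply: IH (leq_trans sg sf) _; apply: poly_ge0_cc.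
have [Bx1|x1B] := ltrP B x1.
  have fB : 0 <= f.[B] by apply: f0; rewrite lexx ltW.
  have [r] := polyrcf.poly_ivt (ltW Bx1) (mulr_ge0_le0 fB (ltW fx1)).
  rewrite in_itv /= => /andP[Br _] /factor[g ef sg].
  rewrite ef -mulrNN opprB; apply: itv_preordering_CsubXM (Br) _.
  apply: IHg; rewrite ?size_polyN // => y /andP[Ay yB].
  have fy : 0 <= f.[y] by apply: f0; rewrite !ltW.
  have yr : y - r < 0 by rewrite subr_lt0 (lt_le_trans yB Br).
  by move: fy; rewrite ef hornerM hornerXsubC nmulr_rge0 // hornerN oppr_ge0.
have [x1A|Ax1] := ltrP x1 A; last by move: fx1; rewrite ltNge f0 ?Ax1.
have fA : 0 <= f.[A] by apply: f0; rewrite lexx ltW.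
have [r] := polyrcf.poly_ivt (ltW x1A) (mulr_le0_ge0 (ltW fx1) fA).
rewrite in_itv /= => /andP[_ rA] /factor[g ef sg].
rewrite ef; apply: itv_preordering_XsubCM (rA) _; apply: IHg => // y /andP[Ay yB].
have fy : 0 <= f.[y] by apply: f0; rewrite !ltW.
have yr : 0 < y - r by rewrite subr_gt0 (le_lt_trans rA Ay).
by move: fy; rewrite ef hornerM hornerXsubC pmulr_rge0.
Qed.

End IntervalPreordering.

Section Gaps.
Variable R : realType.
Implicit Types (u f g : {poly R}) (x y : R).

Lemma bernoulli_le1 (t : R) n : 0 <= t <= 1 -> t ^+ n * (1 + n%:R * (1 - t)) <= 1.
Proof.
move=> /andP[t0 t1]; elim: n => [|n IH]; first by rewrite expr0 mul0r addr0 mulr1.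
apply: le_trans IH; rewrite exprS -natr1.
have tn : 0 <= t ^+ n by apply: exprn_ge0.
have : 0 <= t ^+ n * (n.+1%:R * (1 - t) ^+ 2).
  by apply: mulr_ge0 => //; apply: mulr_ge0; [exact: ler0n | exact: sqr_ge0].
rewrite -natr1; nra.
Qed.

Lemma exprn_dominated (a b D E : R) : 0 <= a -> a < b -> 0 <= D -> 0 < E ->
  exists n0, forall n, (n0 <= n)%N -> D * a ^+ n <= E * b ^+ n.
Proof.
move=> a0 ab D0 E0; have b0 : 0 < b by apply: le_lt_trans ab.
pose t := a / b; pose D' := D / E.
have t01 : 0 <= t <= 1.
  by rewrite /t divr_ge0 ?(ltW b0) //= ler_pdivrMr // mul1r ltW.
have t1 : 0 < 1 - t by rewrite subr_gt0 /t ltr_pdivrMr // mul1r.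
exists (Num.bound (D' / (1 - t))) => n hn.
have Dn : D' <= 1 + n%:R * (1 - t).
  have : D' / (1 - t) < n%:R.
    have D'0 : 0 <= D' / (1 - t) by rewrite !divr_ge0 // ltW.
    by apply: lt_le_trans (archi_boundP D'0) _; rewrite ler_nat.
  rewrite ltr_pdivrMr // => /ltW; lra.
have : D' * t ^+ n <= 1.
  apply: le_trans (bernoulli_le1 n t01); rewrite mulrC ler_wpM2l //.
  exact/exprn_ge0/(andP t01).1.
rewrite /D' /t expr_div_n mulrA ler_pdivrMr ?exprn_gt0 // mul1r mulrAC.
by rewrite ler_pdivrMr // [_ * E]mulrC.
Qed.

Lemma lerXn2r_ge0 n x y : 0 <= x -> x <= y -> x ^+ n <= y ^+ n.
Proof. by move=> x0 xy; apply: lerXn2r => //; rewrite nnegrE (le_trans x0). Qed.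

Lemma gap_bump_sign (p q c : R) N : 0 < p -> p < q -> q <= c -> odd N ->
  c ^+ 2 * (c - q) ^+ N <= p * q * c ^+ N ->
  forall y, 0 <= y * (p * q * c ^+ N - (y - p) * (y - q) * (c - y) ^+ N).
Proof.
move=> p0 pq qc oN hN y; have c0 : 0 < c by lra.
have K0 : 0 <= p * q * c ^+ N by rewrite !mulr_ge0 ?exprn_ge0 //; lra.
have [y0|y0] := ltrP y 0.
  apply: mulr_le0; first exact: ltW.
  rewrite subr_le0; apply: ler_pM; [nra | apply: exprn_ge0 | nra | apply: lerXn2r_ge0]; lra.
apply: mulr_ge0; rewrite // subr_ge0.
have [yp|py] := lerP y p.
  by apply: ler_pM; [nra | apply: exprn_ge0 | nra | apply: lerXn2r_ge0]; lra.
have [yq|qy] := lerP y q.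
  by apply: le_trans K0; apply: mulr_le0_ge0; [nra | apply: exprn_ge0; lra].
have [yc|cy] := lerP y c.
  apply: le_trans hN; apply: ler_pM; [nra | apply: exprn_ge0 | nra | apply: lerXn2r_ge0]; lra.
apply: le_trans K0; apply: mulr_ge0_le0; first nra.
by rewrite exprn_odd_le0 //; lra.
Qed.

(* p q c^N - (X - p)(X - q)(c - X)^N vanishes at 0; its quotient by X is nonnegative. *)
Lemma gap_bezout (p q c : R) : 0 < p -> p < q -> q <= c ->
  exists (n : nat) (k : R) (E : {poly R}),
  [/\ 0 < k, sos E &
   'X * E + ('X - p%:P) * ('X - q%:P) * (k%:P * (c%:P - 'X) ^+ n.*2.+1) = 1].
Proof.
move=> p0 pq qc; have cq : 0 <= c - q by lra.
have cqc : c - q < c by lra.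
have pq0 : 0 < p * q by rewrite mulr_gt0 //; lra.
have [n0 hn0] := exprn_dominated cq cqc (sqr_ge0 c) pq0.
pose N := n0.*2.+1.
have hN : c ^+ 2 * (c - q) ^+ N <= p * q * c ^+ N by apply: hn0; rewrite /N; lia.
pose K := p * q * c ^+ N.
have K0 : 0 < K by rewrite mulr_gt0 // exprn_gt0 //; lra.
pose G := K%:P - ('X - p%:P) * ('X - q%:P) * (c%:P - 'X) ^+ N.
have /factor_theorem[E0] : root G 0.
  by rewrite rootE /G !hornerE subr0 mulrNN subrr.
rewrite subr0 mulrC => eG.
have E0ge0 : forall y, 0 <= E0.[y].
  apply: (poly_ge0_punctured (x := 0)) => y y0.
  have : 0 <= y * G.[y].
    have oN : odd N by rewrite /N /= odd_double.
    by have := gap_bump_sign p0 pq qc oN hN y; rewrite /G !hornerE.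
  by rewrite eG hornerM hornerX mulrA -expr2 pmulr_rge0 // exprn_even_gt0.
exists n0, K^-1, (K^-1%:P * E0); split; rewrite ?invr_gt0 //.
  by apply: sosM; [apply/sosC; rewrite invr_ge0 ltW | exact: poly_ge0_sos].
have -> : 'X * (K^-1%:P * E0) + ('X - p%:P) * ('X - q%:P) * (K^-1%:P * (c%:P - 'X) ^+ N)
    = K^-1%:P * ('X * E0 + ('X - p%:P) * ('X - q%:P) * (c%:P - 'X) ^+ N) by ring.
by rewrite -eG /G subrK -polyCM mulVf ?gt_eqF.
Qed.

Lemma sos_comp u f : sos f -> sos (f \Po u).
Proof. exact: (sos_rmorph (comp_poly u)). Qed.

(* Substituting u into the Bezout identity of gap_bezout and multiplying it by
   u (u - p)(u - q). *)
Lemma gap_mul_certificate u (p q c : R) : 0 <= p -> p < q -> q <= c ->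
  exists s1 s2 s3, [/\ sos s1, sos s2, sos s3 &
    u * ((u - p%:P) * (u - q%:P)) =
      s1 * ((u - p%:P) * (u - q%:P)) + s2 * u + s3 * (u * (c%:P - u))].
Proof.
move=> p0 pq qc; have q0 : 0 < q by lra.
have [->|pn0] := eqVneq p 0.
  exists q%:P, ((u - q%:P) ^+ 2), 0.
  split; [exact/sosC/ltW | exact: sos_sqr | exact: sos0 |].
  by rewrite polyC0 subr0; ring.
have {pn0}p0 : 0 < p by rewrite lt_def pn0.
have [n [k [E [k0 sE hE]]]] := gap_bezout p0 pq qc.
have := congr1 (comp_poly u) hE.
rewrite rmorph1 !rmorphD !rmorphM /= !rmorphB /= rmorphXn /= !rmorphB /=
  !comp_polyX !comp_polyC => hu.
exists (u ^+ 2 * (E \Po u)), 0, (k%:P * (((u - p%:P) * (u - q%:P)) * (c%:P - u) ^+ n) ^+ 2).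
split; [exact/sos_sqrM/sos_comp | exact: sos0 | exact/sosM/sos_sqr/sosC/ltW |].
by rewrite -[LHS]mulr1 -{1}hu exprSr -muln2 exprM; ring.
Qed.

Lemma gap_weight_mono (A al be x y : R) m : A <= al -> al <= be -> be <= x -> x <= y ->
  (x - be) * (x - al) * (x - A) ^+ m <= (y - be) * (y - al) * (y - A) ^+ m.
Proof.
move=> Aal albe bex xy.
apply: ler_pM; [nra | apply: exprn_ge0; lra | nra | apply: lerXn2r_ge0; lra].
Qed.

(* A high even power of (X - A) flattens (X - be)(X - al) on [A, al]. *)
Lemma gap_weight (A al be ga : R) : A <= al -> al < be -> be < ga ->
  exists m, forall x, A <= x <= ga ->
    (x - be) * (x - al) * (x - A) ^+ m.*2 <= (ga - be) * (ga - al) * (ga - A) ^+ m.*2.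
Proof.
move=> Aal albe bega.
have qg0 : 0 < (ga - be) * (ga - al) by rewrite mulr_gt0 //; lra.
have Aal' : 0 <= al - A by lra.
have alga : al - A < ga - A by lra.
have [m hm] := exprn_dominated Aal' alga (sqr_ge0 (ga - A)) qg0.
exists m => x /andP[Ax xga].
have [xal|alx] := lerP x al.
  have m2 : (m <= m.*2)%N by rewrite -addnn leq_addl.
  apply: le_trans (hm _ m2).
  apply: ler_pM; [nra | apply: exprn_ge0; lra | nra | apply: lerXn2r_ge0; lra].
have [xbe|bex] := ltrP x be.
  apply: le_trans (_ : 0 <= _); last by rewrite mulr_ge0 ?exprn_ge0 ?ltW //; lra.
  by apply: mulr_le0_ge0; [nra | apply: exprn_ge0; lra].
by apply: gap_weight_mono => //; apply: ltW.
Qed.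

(* On [A, +oo) the product (psi - psi(ga))(psi - psi(de)) has the sign of (X - de)(X - ga),
   as psi stays below psi(ga) left of ga and increases past it. *)
Lemma two_roots_cofactor_ge0 (psi r : {poly R}) (A ga de : R) : ga < de ->
  (forall x y, ga <= x -> x <= y -> psi.[x] <= psi.[y]) ->
  (forall x, A <= x <= ga -> psi.[x] <= psi.[ga]) -> psi.[ga] < psi.[de] ->
  (psi - psi.[ga]%:P) * (psi - psi.[de]%:P) = ('X - de%:P) * ('X - ga%:P) * r ->
  forall x, A <= x -> 0 <= r.[x].
Proof.
move=> gade mono psi_ga pq er.
have key x : (x - de) * (x - ga) * r.[x] = (psi.[x] - psi.[ga]) * (psi.[x] - psi.[de]).
  have := congr1 (horner^~ x) er.
  by rewrite !hornerM !hornerD !hornerN !hornerC !hornerX => <-.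
have rmid y : ga < y < de -> 0 <= r.[y].
  move=> /andP[gay yde]; have neg : (y - de) * (y - ga) < 0 by nra.
  rewrite -(nmulr_rle0 _ neg) key; apply: mulr_ge0_le0; rewrite ?subr_ge0 ?subr_le0.
    by apply: mono; rewrite // ltW.
  by apply: mono; apply: ltW.
move=> x Ax; have [xga|gax] := ltrP x ga.
  have pos : 0 < (x - de) * (x - ga) by nra.
  rewrite -(pmulr_rge0 _ pos) key; apply: mulr_le0; rewrite subr_le0.
    by rewrite psi_ga // Ax ltW.
  by rewrite (le_trans _ (ltW pq)) // psi_ga // Ax ltW.
have [xde|dex] := ltrP x de.
  have [<-|gx] := eqVneq ga x; first exact: poly_ge0_oo_left rmid.
  by apply: rmid; rewrite xde andbT lt_def eq_sym gx gax.
have [->|dx] := eqVneq x de; first exact: poly_ge0_oo_right rmid.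
have pos : 0 < (x - de) * (x - ga) by rewrite mulr_gt0 // subr_gt0 ?lt_def ?dx //; lra.
rewrite -(pmulr_rge0 _ pos) key; apply: mulr_ge0; rewrite subr_ge0.
  exact: le_trans (ltW pq) (mono _ _ (ltW gade) dex).
exact: mono _ _ (ltW gade) dex.
Qed.

(* The weight (X - A)^2m turns (X - be)(X - al) into a polynomial psi that is at most
   psi(ga) on [A, ga] and increasing beyond be; substituting psi into gap_bezout and
   dividing (psi - psi(ga))(psi - psi(de)) by (X - de)(X - ga) gives the certificate. *)
Lemma two_gaps_bezout (A B al be ga de : R) :
  A <= al -> al < be -> be < ga -> ga < de -> de <= B ->
  exists e1 e2, [/\ sos e1, itv_preordering A B e2 &
    ('X - be%:P) * ('X - al%:P) * e1 + ('X - de%:P) * ('X - ga%:P) * e2 = 1].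
Proof.
move=> Aal albe bega gade deB.
have [m hm] := gap_weight Aal albe bega.
pose psi := ('X - be%:P) * ('X - al%:P) * ('X - A%:P) ^+ m.*2.
have psiE x : psi.[x] = (x - be) * (x - al) * (x - A) ^+ m.*2.
  by rewrite /psi !hornerM horner_exp !hornerXsubC.
have mono x y : be <= x -> x <= y -> psi.[x] <= psi.[y].
  by move=> bex xy; rewrite !psiE; apply: gap_weight_mono => //; apply: ltW.
pose p0 := psi.[ga]; pose q0 := psi.[de]; pose c0 := psi.[B].
have p00 : 0 < p0.
  by rewrite /p0 psiE; apply: mulr_gt0; [apply: mulr_gt0 | apply: exprn_gt0]; lra.
have pq0 : p0 < q0.
  rewrite /p0 /q0 !psiE; apply: (@lt_le_trans _ _ ((de - be) * (de - al) * (ga - A) ^+ m.*2)).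
    by rewrite ltr_pM2r; [nra | apply: exprn_gt0; lra].
  by rewrite ler_pM2l; [apply: lerXn2r_ge0; lra | nra].
have qc0 : q0 <= c0 by apply: mono; lra.
have psi_ga x : A <= x <= ga -> psi.[x] <= p0.
  by move=> hx; rewrite /p0 !psiE; apply: hm.
have psi_le x : A <= x <= B -> psi.[x] <= c0.
  move=> /andP[Ax xB]; have [xga|gax] := lerP x ga; last by apply: mono; lra.
  by rewrite (le_trans (psi_ga x _)) ?Ax // (le_trans (ltW pq0)).
have [N [k [E [k0 sE hE]]]] := gap_bezout p00 pq0 qc0.
have := congr1 (comp_poly psi) hE.
rewrite rmorph1 !rmorphD !rmorphM /= !rmorphB /= rmorphXn /= !rmorphB /=
  !comp_polyX !comp_polyC => hu.
have PE x : ((psi - p0%:P) * (psi - q0%:P)).[x] = (psi.[x] - p0) * (psi.[x] - q0).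
  by rewrite hornerM !hornerD !hornerN !hornerC.
have [r er] : exists r, (psi - p0%:P) * (psi - q0%:P) = ('X - de%:P) * ('X - ga%:P) * r.
  apply: factor_two_roots; first by rewrite gt_eqF.
    by rewrite rootE PE -/q0 subrr mulr0.
  by rewrite rootE PE -/p0 subrr mul0r.
have mono_ga x y : ga <= x -> x <= y -> psi.[x] <= psi.[y].
  by move=> gax; apply: mono; rewrite (le_trans (ltW bega)).
have r0 := two_roots_cofactor_ge0 gade mono_ga psi_ga pq0 er.
exists (('X - A%:P) ^+ m.*2 * (E \Po psi)), (r * (k%:P * (c0%:P - psi) ^+ N.*2.+1)).
split.
- by rewrite -muln2 exprM; apply/sos_sqrM/sos_comp.
- apply: poly_ge0_itv_preordering; first lra.
  move=> x /andP[Ax xB]; rewrite hornerM; apply: mulr_ge0; first exact: r0.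
  rewrite hornerM hornerC; apply: mulr_ge0; first exact: ltW.
  by rewrite horner_exp; apply: exprn_ge0; rewrite hornerD hornerN hornerC subr_ge0 psi_le ?Ax.
- by rewrite -hu er /psi; ring.
Qed.

End Gaps.

(* x y z = (x^2 (y z) + y^2 (x z)) / c when x + y = c. *)
Lemma qmodule_mul_complement (R : realType) (S : seq {poly R}) (x y z : {poly R}) (c : R) :
  0 < c -> x + y = c%:P -> qmodule S (y * z) -> qmodule S (x * z) ->
  qmodule S (x * y * z).
Proof.
move=> c0 xy hyz hxz.
have cV : sos (c^-1)%:P by apply: sosC; rewrite invr_ge0 ltW.
have -> : x * y * z = (c^-1)%:P * (x ^+ 2 * (y * z)) + (c^-1)%:P * (y ^+ 2 * (x * z)).
  have cc : (c^-1)%:P * c%:P = 1 by rewrite -polyCM mulVf ?gt_eqF.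
  by rewrite -[LHS]mul1r -cc -xy; ring.
by apply: qmoduleD; apply/qmodule_sosM/qmodule_sosM => //; apply: sos_sqr.
Qed.

Section NaturalGenerators.
Variables (R : realType) (k : nat) (a b : nat -> R).
Hypothesis hab : forall i, (i <= k)%N -> a i <= b i.
Hypothesis hba : forall i, (i < k)%N -> b i < a i.+1.

Let S := natgens k a b.
Let l := 'X - (a 0)%:P.
Let r := (b k)%:P - 'X.
Let gap j := ('X - (a j.+1)%:P) * ('X - (b j)%:P).

Lemma size_natgens : size S = k.+2.
Proof. by rewrite /S /natgens /= size_rcons size_map size_iota. Qed.

Lemma natgens_first : S`_0 = l. Proof. by []. Qed.

Lemma natgens_last : S`_k.+1 = r.
Proof. by rewrite /S /natgens /= nth_rcons size_map size_iota ltnn eqxx. Qed.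

Lemma natgens_gap j : (j < k)%N -> S`_j.+1 = gap j.
Proof.
move=> jk; rewrite /S /natgens /= nth_rcons size_map size_iota jk.
by rewrite (nth_map 0%N) ?size_iota // nth_iota.
Qed.

Lemma natgen_lt_a m n : (m < n)%N -> (n <= k)%N -> b m < a n.
Proof.
elim: n => [//|n IH] mn nk; have [->|mn'] := eqVneq m n; first exact: hba.
have mn2 : (m < n)%N by rewrite ltn_neqAle mn' -ltnS.
exact: lt_trans (IH mn2 (ltnW nk)) (le_lt_trans (hab (ltnW nk)) (hba nk)).
Qed.

Lemma natgen_a_le_b m n : (m <= n)%N -> (n <= k)%N -> a m <= b n.
Proof.
move=> mn nk; have [->|mn'] := eqVneq m n; first exact: hab.
have mn2 : (m < n)%N by rewrite ltn_neqAle mn' mn.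
exact: le_trans (hab (leq_trans mn nk)) (ltW (lt_le_trans (natgen_lt_a mn2 nk) (hab nk))).
Qed.

Lemma qmodule_natgen i s : (i < k.+2)%N -> sos s -> qmodule S (s * S`_i).
Proof. by rewrite -size_natgens => ik; apply: (qmodule_gen (Ordinal ik)). Qed.

Lemma qmodule_l s : sos s -> qmodule S (s * l).
Proof. by rewrite -natgens_first; apply: qmodule_natgen. Qed.

Lemma qmodule_r s : sos s -> qmodule S (s * r).
Proof. by rewrite -natgens_last; apply: qmodule_natgen. Qed.

Lemma qmodule_gap j s : (j < k)%N -> sos s -> qmodule S (s * gap j).
Proof. by move=> jk; rewrite -natgens_gap //; apply: qmodule_natgen; rewrite ltnS ltnW. Qed.

Lemma l_add_r : l + r = (b k - a 0)%:P.
Proof. by rewrite /l /r polyCB; ring. Qed.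

Lemma qmodule_lr : qmodule S (l * r).
Proof.
have [lt|] := ltrP (a 0) (b k).
  rewrite -[l * r]mulr1; apply: qmodule_mul_complement l_add_r _ _; rewrite ?subr_gt0 //.
    by rewrite mulr1 -[r]mul1r; apply/qmodule_r/sos1.
  by rewrite mulr1 -[l]mul1r; apply/qmodule_l/sos1.
move=> ba; have eab : b k = a 0 by apply/eqP; rewrite eq_le ba natgen_a_le_b.
have er : r = - l by rewrite /r /l eab; ring.
have e : l * r = ((l - 1) * (2^-1)%:P) ^+ 2 * l + ((l + 1) * (2^-1)%:P) ^+ 2 * r.
  have h2 : (2^-1)%:P * 2 = 1 :> {poly R}.
    by rewrite -[2 : {poly R}]polyC_natr -polyCM mulVf ?pnatr_eq0.
  rewrite er; transitivity (((2^-1)%:P * 2) ^+ 2 * (l * - l)); last ring.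
  by rewrite h2 expr1n mul1r.
by rewrite e; apply: qmoduleD; [apply: qmodule_l | apply: qmodule_r]; apply: sos_sqr.
Qed.

Lemma qmodule_l_gap j : (j < k)%N -> qmodule S (l * gap j).
Proof.
move=> jk.
have h0 : 0 <= b j - a 0 by rewrite subr_ge0 natgen_a_le_b // ltnW.
have h1 : b j - a 0 < a j.+1 - a 0 by rewrite ltrD2r hba.
have h2 : a j.+1 - a 0 <= b k - a 0 by rewrite lerD2r natgen_a_le_b.
have [s1 [s2 [s3 [hs1 hs2 hs3 e]]]] := gap_mul_certificate l h0 h1 h2.
have -> : l * gap j = l * ((l - (b j - a 0)%:P) * (l - (a j.+1 - a 0)%:P)).
  by rewrite /l /gap !polyCB; ring.
have lr : (b k - a 0)%:P - l = r by rewrite /l /r polyCB; ring.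
rewrite e lr; apply: qmoduleD; first apply: qmoduleD.
- have -> : (l - (b j - a 0)%:P) * (l - (a j.+1 - a 0)%:P) = gap j.
    by rewrite /l /gap !polyCB; ring.
  exact: qmodule_gap.
- exact: qmodule_l.
- exact/qmodule_sosM/qmodule_lr.
Qed.

Lemma qmodule_r_gap j : (j < k)%N -> qmodule S (r * gap j).
Proof.
move=> jk.
have h0 : 0 <= b k - a j.+1 by rewrite subr_ge0 natgen_a_le_b.
have h1 : b k - a j.+1 < b k - b j by rewrite ltrD2l ltrN2 hba.
have h2 : b k - b j <= b k - a 0 by rewrite lerD2l lerN2 natgen_a_le_b // ltnW.
have [s1 [s2 [s3 [hs1 hs2 hs3 e]]]] := gap_mul_certificate r h0 h1 h2.
have -> : r * gap j = r * ((r - (b k - a j.+1)%:P) * (r - (b k - b j)%:P)).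
  by rewrite /r /gap !polyCB; ring.
have rl : (b k - a 0)%:P - r = l by rewrite /l /r polyCB; ring.
rewrite e rl; apply: qmoduleD; first apply: qmoduleD.
- have -> : (r - (b k - a j.+1)%:P) * (r - (b k - b j)%:P) = gap j.
    by rewrite /r /gap !polyCB; ring.
  exact: qmodule_gap.
- exact: qmodule_r.
- by apply/qmodule_sosM; rewrite // mulrC; apply: qmodule_lr.
Qed.

Lemma qmodule_gap_itv_preordering j f : (j < k)%N ->
  itv_preordering (a 0) (b k) f -> qmodule S (gap j * f).
Proof.
move=> jk [s0 [s1 [s2 [s3 [h0 h1 h2 h3 ->]]]]].
have -> : gap j * (s0 + ('X - (a 0)%:P) * s1 + ((b k)%:P - 'X) * s2 +
    ('X - (a 0)%:P) * ((b k)%:P - 'X) * s3) =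
  s0 * gap j + s1 * (l * gap j) + s2 * (r * gap j) + s3 * (l * r * gap j).
  by rewrite /l /r; ring.
have k0 : (0 < k)%N by apply: leq_ltn_trans jk.
have ab : 0 < b k - a 0.
  by rewrite subr_gt0 (le_lt_trans (hab (leq0n k))) // (lt_le_trans (hba k0)) ?natgen_a_le_b.
apply: qmoduleD; first apply: qmoduleD; first apply: qmoduleD.
- exact: qmodule_gap.
- exact/qmodule_sosM/qmodule_l_gap.
- exact/qmodule_sosM/qmodule_r_gap.
- apply/qmodule_sosM/(qmodule_mul_complement ab l_add_r) => //.
  + exact: qmodule_r_gap.
  + exact: qmodule_l_gap.
Qed.

Lemma qmodule_gap_gap i j : (i < j)%N -> (j < k)%N -> qmodule S (gap i * gap j).
Proof.
move=> ij jk; have ik : (i < k)%N by apply: ltn_trans jk.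
have Aal : a 0 <= b i by rewrite natgen_a_le_b // ltnW.
have albe : b i < a i.+1 by apply: hba.
have bega : a i.+1 <= b j by rewrite natgen_a_le_b // ltnW.
have gade : b j < a j.+1 by apply: hba.
have deB : a j.+1 <= b k by rewrite natgen_a_le_b.
have [blt|beq] := ltrP (a i.+1) (b j).
  have [e1 [e2 [he1 he2 e]]] := two_gaps_bezout Aal albe blt gade deB.
  have -> : gap i * gap j = gap i ^+ 2 * (e1 * gap j) + gap j ^+ 2 * (gap i * e2).
    by rewrite -[LHS]mulr1 -e /gap; ring.
  apply: qmoduleD; apply: qmodule_sosM (sos_sqr _) _.
  - exact: qmodule_gap.
  - exact: qmodule_gap_itv_preordering.
have ebg : b j = a i.+1 by apply/eqP; rewrite eq_le beq bega.
pose d := a j.+1 - b i.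
have d0 : 0 < d by rewrite /d; lra.
pose a' := (a j.+1 - a i.+1) / d; pose b' := (a i.+1 - b i) / d.
have a'0 : 0 <= a' by apply: divr_ge0; rewrite /d; lra.
have b'0 : 0 <= b' by apply: divr_ge0; rewrite /d; lra.
(* The two gaps share the endpoint a_(i+1) = b_j, and a', b' interpolate it between
   b_i and a_(j+1). *)
have -> : gap i * gap j =
    (a'%:P * ('X - (b i)%:P) ^+ 2) * gap j + (b'%:P * ('X - (a j.+1)%:P) ^+ 2) * gap i.
  apply: (@mulfI _ d%:P); first by rewrite polyC_eq0 gt_eqF.
  have ea : d%:P * a'%:P = (a j.+1 - a i.+1)%:P by rewrite -polyCM mulrC divfK ?gt_eqF.
  have eb : d%:P * b'%:P = (a i.+1 - b i)%:P by rewrite -polyCM mulrC divfK ?gt_eqF.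
  by rewrite mulrDr !mulrA ea eb /gap ebg /d !polyCB; ring.
by apply: qmoduleD; apply: qmodule_gap => //; apply/sosM/sos_sqr/sosC.
Qed.

Lemma qmodule_natgens_lt i j : (i < j)%N -> (j < k.+2)%N -> qmodule S (S`_i * S`_j).
Proof.
case: j => [//|j] ij; rewrite !ltnS leq_eqVlt => /orP[/eqP ejk|jk].
  subst j; rewrite natgens_last; case: i ij => [|i] ij; first exact: qmodule_lr.
  by rewrite natgens_gap // mulrC; apply: qmodule_r_gap.
rewrite natgens_gap //; case: i ij => [|i] ij; first exact: qmodule_l_gap.
rewrite ltnS in ij; rewrite natgens_gap ?(ltn_trans ij) //.
exact: qmodule_gap_gap.
Qed.

Lemma pairwise_qmodule_natgens : pairwise_qmodule S.
Proof.
move=> i j; have hi : (i < k.+2)%N by rewrite -size_natgens ltn_ord.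
have hj : (j < k.+2)%N by rewrite -size_natgens ltn_ord.
rewrite neq_ltn => /orP[] ij; first exact: qmodule_natgens_lt.
by rewrite mulrC; apply: qmodule_natgens_lt.
Qed.

End NaturalGenerators.

Theorem lemma1 (R : realType) (k : nat) (a b : nat -> R)
  (hab : forall i, (i <= k)%N -> a i <= b i)
  (hba : forall i, (i < k)%N -> b i < a i.+1) :
  (forall p : {poly R},
     preordering (natgens k a b) p <-> qmodule (natgens k a b) p) /\
  (forall p : {poly {poly R}},
     preordering (map polyC (natgens k a b)) p <->
     qmodule (map polyC (natgens k a b)) p).
Proof.
have pairS := pairwise_qmodule_natgens hab hba.
split=> p; apply: preordering_eq_qmodule => //.
exact: pairwise_qmodule_map.
Qed.
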